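(* Let $N=3$ and let $(p_1,p_2,p_3)$ be a probability vector with $$4p_1^2p_2p_3-\big(p_1-p_1^2-p_2p_3\big)^2\ge0$$ (the closed region bounded by the 3-hypocycloid). Then the Weyl channel $\Phi_{\vec p}=p_1\,\mathbb{I}\otimes\mathbb{I}+p_2\,X\otimes\overline{X}+p_3\,X^2\otimes\overline{X^2}$ is unistochastic, $\Phi_{\vec p}\in\mathcal{U}_3^Q$, and the corresponding transition matrix $T(\Phi_{\vec p})=p_1\mathbb{I}_3+p_2X+p_3X^2$ is unistochastic, $T(\Phi_{\vec p})\in\mathcal{U}_3^C$.
   Context: $X$ is the $3\times3$ shift $X|j\rangle=|j\oplus1\rangle$ (addition mod 3). Channels are identified with superoperators acting on $|A\rangle\rangle=\sum A_{ij}|i\rangle|j\rangle$ ($\rho\mapsto K\rho K^\dagger$ corresponds to $K\otimes\overline K$). $\mathcal{U}_3^Q$ is the set of channels $\Psi_U(\rho)=\mathrm{Tr}_E[U(\rho\otimes\mathbb{I}_3/3)U^\dagger]$ with $U\in U(9)$ acting on $\mathbb{C}^3\otimes\mathbb{C}^3_E$; $\mathcal{U}_3^C=\{V\odot\overline{V}:V\in U(3)\}$ with $\odot$ the entrywise product. The transition matrix of a channel is $T(\Phi)_{ij}=\mathrm{Tr}[|i\rangle\langle i|\,\Phi(|j\rangle\langle j|)]$. *)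

From mathcomp Require Import all_boot all_algebra.
From mathcomp Require Import reals complex mxtens.
Set Implicit Arguments. Unset Strict Implicit. Unset Printing Implicit Defensive.
Import GRing.Theory Num.Theory.
Local Open Scope ring_scope.

Section Defs.
Variable R : realType.
Local Notation C := R[i].

Definition rC (x : R) : C := Complex x 0.

Definition adjmx {m n} (A : 'M[C]_(m, n)) : 'M[C]_(n, m) :=
  (map_mx Num.conj A)^T.

Definition unitarymx {n} (U : 'M[C]_n) : Prop := U *m adjmx U = 1%:M.

(* shift X|j> = |j (+) 1>, i.e. X_{ij} = [i = j+1 mod 3] *)
Definition shiftX : 'M[C]_3 :=
  \matrix_(i < 3, j < 3) ((nat_of_ord i == (j.+1 %% 3)%N)%:R).

Definition chan3 := 'M[C]_3 -> 'M[C]_3.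

(* Weyl channel p1 I(x)I + p2 X(x)conj X + p3 X^2 (x) conj X^2,
   i.e. rho |-> p1 rho + p2 X rho X^dag + p3 X^2 rho (X^2)^dag *)
Definition weyl_channel (p1 p2 p3 : R) : chan3 := fun rho =>
  rC p1 *: rho
  + rC p2 *: (shiftX *m rho *m adjmx shiftX)
  + rC p3 *: ((shiftX ^+ 2) *m rho *m adjmx (shiftX ^+ 2)).

(* partial trace over the second (environment) factor of C^3 (x) C^3_E,
   with the product basis indexed by mxtens_index (i, e) *)
Definition ptraceE (M : 'M[C]_(3 * 3)) : 'M[C]_3 :=
  \matrix_(i < 3, j < 3)
     \sum_(e < 3) M (mxtens_index (i, e)) (mxtens_index (j, e)).

Definition Psi (U : 'M[C]_(3 * 3)) : chan3 := fun rho =>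
  ptraceE (U *m (rho *t ((rC 3)^-1 *: (1%:M : 'M[C]_3))) *m adjmx U).

Definition in_UQ3 (Phi : chan3) : Prop :=
  exists U : 'M[C]_(3 * 3), unitarymx U /\ forall rho, Psi U rho = Phi rho.

Definition transition (Phi : chan3) : 'M[C]_3 :=
  \matrix_(i < 3, j < 3) \tr (delta_mx i i *m Phi (delta_mx j j)).

Definition in_UC3 (T : 'M[C]_3) : Prop :=
  exists V : 'M[C]_3, unitarymx V /\
    T = \matrix_(i < 3, j < 3) (V i j * (V i j)^*).

End Defs.

From Pilot Require Import Defs.
From mathcomp Require Import all_boot all_order all_algebra.
From mathcomp Require Import reals complex mxtens.
From mathcomp Require Import ring lra.
Import Order.TTheory GRing.Theory Num.Theory.
Local Open Scope ring_scope.
Set Implicit Arguments. Unset Strict Implicit. Unset Printing Implicit Defensive.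

(* The transition matrix of the Weyl channel is the circulant
   T = p1 I + p2 X + p3 X^2, whose entry T e f depends only on e - f mod 3.
   If V is a unitary with |V e f|^2 = T e f, then
   U = \sum_(e, f) V e f X^(e - f) (x) |e><f| is unitary, and tracing out the
   environment gives (1/3) \sum_(e, f) |V e f|^2 X^(e - f) rho X^(f - e),
   which is the Weyl channel; so both claims reduce to the unistochasticity of T.
   A 3x3 unitary is obtained from two orthonormal rows by adding their
   conjugated cross product, and orthogonality of two rows with the moduli
   prescribed by T asks for a closed triangle with sides sqrt (p1 p2),
   sqrt (p1 p3) and sqrt (p2 p3).  When p1 + p2 + p3 = 1 the hypocycloid
   expression is exactly Heron's expression for these sides, so the triangle
   exists.  If some weight vanishes, the hypocycloid condition forces p to be a
   vertex of the simplex, where T is a permutation matrix. *)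

Lemma sum3 (V : nmodType) (F : 'I_3 -> V) : \sum_(i < 3) F i = F 0 + F 1 + F 2.
Proof.
rewrite !big_ord_recl big_ord0 addr0 addrA.
by congr (F _ + F _ + F _); apply: val_inj.
Qed.

Lemma sum_mod_shift (V : nmodType) n (F : nat -> V) a :
  \sum_(e < n.+1) F ((e + a) %% n.+1)%N = \sum_(e < n.+1) F e.
Proof.
pose shift (e : 'I_n.+1) : 'I_n.+1 := inZp (e + a)%N.
have shift_inj : injective shift.
  move=> e e' /(congr1 val) /= /eqP.
  by rewrite eqn_modDr !modn_small // => /eqP /val_inj.
by rewrite [RHS](reindex_inj shift_inj).
Qed.

Section ComplexMatrix.
Variable R : realType.
Local Notation C := R[i].

Lemma rCE (x : R) : rC x = x%:C%C. Proof. by []. Qed.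

Lemma conj_rC (x : R) : (rC x)^* = rC x.
Proof. exact: conjc_real. Qed.

Lemma rC_sqrt (x : R) : 0 <= x -> rC (Num.sqrt x) * rC (Num.sqrt x) = rC x.
Proof. by move=> x_ge0; rewrite !rCE -rmorphM /= -expr2 sqr_sqrtr. Qed.

Lemma rC_sqrt_sqmod (x : R) : 0 <= x -> rC (Num.sqrt x) * (rC (Num.sqrt x))^* = rC x.
Proof. by move=> x_ge0; rewrite conj_rC rC_sqrt. Qed.

Lemma adjmxM m n p (A : 'M[C]_(m, n)) (B : 'M[C]_(n, p)) :
  adjmx (A *m B) = adjmx B *m adjmx A.
Proof. by rewrite /adjmx map_mxM trmx_mul. Qed.

Lemma adjmxZ m n (c : C) (A : 'M[C]_(m, n)) : adjmx (c *: A) = c^* *: adjmx A.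
Proof. by apply/matrixP => i j; rewrite !mxE rmorphM. Qed.

Lemma adjmx1 n : adjmx (1%:M : 'M[C]_n) = 1%:M.
Proof. by rewrite /adjmx map_mx1 trmx1. Qed.

Lemma unitarymx1 n : Defs.unitarymx (1%:M : 'M[C]_n).
Proof. by rewrite /Defs.unitarymx adjmx1 mulmx1. Qed.

Lemma unitarymxM n (U W : 'M[C]_n) : Defs.unitarymx U -> Defs.unitarymx W -> Defs.unitarymx (U *m W).
Proof.
by rewrite /Defs.unitarymx adjmxM => hU hW; rewrite mulmxA -(mulmxA U) hW mulmx1.
Qed.

Lemma mulmx_unitary_adj m n (A B : 'M[C]_(m, n)) (W : 'M[C]_n) :
  Defs.unitarymx W -> (A *m W) *m adjmx (B *m W) = A *m adjmx B.
Proof. by move=> hW; rewrite adjmxM mulmxA -(mulmxA A) hW mulmx1. Qed.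

Lemma unitarymx_col_sqnorm n (U : 'M[C]_n) j :
  Defs.unitarymx U -> \sum_i U i j * (U i j)^* = 1.
Proof.
move=> /mulmx1C /matrixP /(_ j j); rewrite !mxE eqxx.
move=> h; transitivity (\sum_i adjmx U j i * U i j); last exact: h.
by apply: eq_bigr => i _; rewrite !mxE mulrC.
Qed.

End ComplexMatrix.

Section BlockMatrix.
Variables (K : comPzRingType) (m n : nat).

(* blkmx A = \sum_(e, f) A e f *t delta_mx e f *)
Definition blkmx (A : 'I_n -> 'I_n -> 'M[K]_m) : 'M[K]_(m * n) :=
  \matrix_(x, y) A (mxtens_unindex x).2 (mxtens_unindex y).2
                   (mxtens_unindex x).1 (mxtens_unindex y).1.

Lemma blkmxE A i e j f :
  blkmx A (mxtens_index (i, e)) (mxtens_index (j, f)) = A e f i j.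
Proof. by rewrite mxE !mxtens_indexK. Qed.

Lemma sum_mxtens_index (V : nmodType) (F : 'I_(m * n) -> V) :
  \sum_k F k = \sum_i \sum_e F (mxtens_index (i, e)).
Proof.
rewrite pair_big (reindex (@mxtens_index m n)) /=; last first.
  by exists (@mxtens_unindex m n) => k _; [apply: mxtens_indexK | apply: mxtens_unindexK].
by apply: eq_bigr => -[i e].
Qed.

Lemma mul_blkmx A B :
  blkmx A *m blkmx B = blkmx (fun e g => \sum_f A e f *m B f g).
Proof.
apply/matrixP => x y.
case: (mxtens_indexP x) => i e; case: (mxtens_indexP y) => j g.
rewrite mxE !blkmxE summxE sum_mxtens_index exchange_big.
by apply: eq_bigr => f _; rewrite mxE; apply: eq_bigr => k _; rewrite !blkmxE.
Qed.

Lemma tensmx_blkmx (A : 'M[K]_m) (B : 'M[K]_n) :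
  A *t B = blkmx (fun e f => B e f *: A).
Proof.
apply/matrixP => x y.
case: (mxtens_indexP x) => i e; case: (mxtens_indexP y) => j f.
by rewrite tensmxE blkmxE mxE mulrC.
Qed.

Lemma eq_blkmx A B : (forall e f, A e f = B e f) -> blkmx A = blkmx B.
Proof. by move=> eqAB; apply/matrixP => x y; rewrite !mxE eqAB. Qed.

Lemma blkmx1 : blkmx (fun e f => (e == f)%:R *: 1%:M) = 1%:M.
Proof.
apply/matrixP => x y.
case: (mxtens_indexP x) => i e; case: (mxtens_indexP y) => j f.
rewrite blkmxE !mxE (inj_eq (can_inj (@mxtens_indexK m n))) xpair_eqE.
by rewrite -natrM mulnb andbC.
Qed.

Lemma mul_blkmx_diag A (B : 'I_n -> 'M[K]_m) :
  blkmx A *m blkmx (fun f g => (f == g)%:R *: B f) = blkmx (fun e g => A e g *m B g).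
Proof.
rewrite mul_blkmx; apply: eq_blkmx => e g.
under eq_bigr => f _ do rewrite -scalemxAr.
by rewrite (bigD1 g) //= eqxx scale1r big1 ?addr0 // => f /negbTE ->; rewrite scale0r.
Qed.

End BlockMatrix.

Section BlockAdjoint.
Variable R : realType.
Local Notation C := R[i].

Lemma adjmx_blkmx m n (A : 'I_n -> 'I_n -> 'M[C]_m) :
  adjmx (blkmx A) = blkmx (fun e f => adjmx (A f e)).
Proof.
by apply/matrixP => x y; rewrite !mxE.
Qed.

Lemma ptraceE_blkmx (A : 'I_3 -> 'I_3 -> 'M[C]_3) :
  ptraceE (blkmx A) = \sum_e A e e.
Proof. by apply/matrixP => i j; rewrite !mxE summxE; apply: eq_bigr => e _; rewrite blkmxE. Qed.

End BlockAdjoint.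

Section ThreeByThree.
Variable K : pzRingType.

Definition mx3 (a b c d e f g h k : K) : 'M[K]_3 :=
  \matrix_(i, j) nth 0 (nth [::] [:: [:: a; b; c]; [:: d; e; f]; [:: g; h; k]] i) j.

Lemma mulmx3 a b c d e f g h k a' b' c' d' e' f' g' h' k' :
  mx3 a b c d e f g h k *m mx3 a' b' c' d' e' f' g' h' k' =
  mx3 (a*a' + b*d' + c*g') (a*b' + b*e' + c*h') (a*c' + b*f' + c*k')
      (d*a' + e*d' + f*g') (d*b' + e*e' + f*h') (d*c' + e*f' + f*k')
      (g*a' + h*d' + k*g') (g*b' + h*e' + k*h') (g*c' + h*f' + k*k').
Proof.
apply/matrixP => i j; rewrite !mxE sum3 !mxE.
by case: i j => [[|[|[|?]]] ?] [[|[|[|?]]] ?].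
Qed.

Lemma mx3_1 : mx3 1 0 0 0 1 0 0 0 1 = 1%:M.
Proof. by apply/matrixP => i j; rewrite !mxE; case: i j => [[|[|[|?]]] ?] [[|[|[|?]]] ?]. Qed.

End ThreeByThree.

Ltac simp01 := rewrite ?conjC0 ?conjC1 ?mul0r ?mulr0 ?mul1r ?mulr1 ?add0r ?addr0.

Section Shift.
Variable R : realType.
Local Notation C := R[i].
Local Notation X := (shiftX R).

Lemma adjmx3 (a b c d e f g h k : C) :
  adjmx (mx3 a b c d e f g h k) = mx3 a^* d^* g^* b^* e^* h^* c^* f^* k^*.
Proof. by apply/matrixP => i j; rewrite !mxE; case: i j => [[|[|[|?]]] ?] [[|[|[|?]]] ?]. Qed.

Lemma shiftXE : X = mx3 0 0 1 1 0 0 0 1 0.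
Proof. by apply/matrixP => i j; rewrite !mxE; case: i j => [[|[|[|?]]] ?] [[|[|[|?]]] ?]. Qed.

Lemma shiftX2E : X ^+ 2 = mx3 0 1 0 0 0 1 1 0 0.
Proof. by rewrite expr2 -mulmxE shiftXE mulmx3; simp01. Qed.

Lemma shiftX3 : X ^+ 3 = 1.
Proof.
rewrite exprS shiftX2E -mulmxE shiftXE mulmx3; simp01; exact: mx3_1.
Qed.

Lemma shiftX_exp_mod k : X ^+ k = X ^+ (k %% 3).
Proof. by rewrite {1}(divn_eq k 3) exprD mulnC exprM shiftX3 expr1n mul1r. Qed.

Lemma unitarymx_shiftX : Defs.unitarymx X.
Proof. by rewrite /Defs.unitarymx shiftXE adjmx3 mulmx3 -mx3_1; simp01. Qed.

Lemma unitarymx_shiftX_exp k : Defs.unitarymx (X ^+ k).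
Proof.
elim: k => [|k IHk]; first exact: unitarymx1.
by rewrite exprSr -mulmxE; apply: unitarymxM IHk unitarymx_shiftX.
Qed.

End Shift.

Section DeltaProducts.
Variables (K : pzSemiRingType) (n : nat).

Lemma mul_delta_mxE (i j : 'I_n) (A : 'M[K]_n) k l :
  (delta_mx i j *m A) k l = (k == i)%:R * A j l.
Proof.
rewrite mxE (bigD1 j) //= big1 ?addr0 => [|h /negbTE nhj]; rewrite mxE.
  by rewrite eqxx andbT.
by rewrite nhj andbF mul0r.
Qed.

Lemma mulmx_deltaE (i j : 'I_n) (A : 'M[K]_n) k l :
  (A *m delta_mx i j) k l = A k i * (l == j)%:R.
Proof.
rewrite mxE (bigD1 i) //= big1 ?addr0 => [|h /negbTE nhi]; rewrite mxE.
  by rewrite eqxx.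
by rewrite nhi mulr0.
Qed.

Lemma mxtrace_delta_mul i (A : 'M[K]_n) : \tr (delta_mx i i *m A) = A i i.
Proof.
rewrite /mxtrace (bigD1 i) //= big1 ?addr0 => [|h /negbTE nhi];
  by rewrite mul_delta_mxE ?eqxx ?mul1r // nhi mul0r.
Qed.

End DeltaProducts.

Section Dilation.
Variable R : realType.
Local Notation C := R[i].
Local Notation X := (shiftX R).

Definition shift_conj k (rho : 'M[C]_3) := X ^+ k *m rho *m adjmx (X ^+ k).

Lemma shift_conj_mod k rho : shift_conj k rho = shift_conj (k %% 3) rho.
Proof. by rewrite /shift_conj -shiftX_exp_mod. Qed.

(* X ^+ (e + 2 * f) is X^(e - f), since X^3 = 1. *)
Definition shift_dilation (V : 'M[C]_3) : 'M[C]_(3 * 3) :=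
  blkmx (fun e f => V e f *: X ^+ (e + 2 * f)%N).

Lemma unitarymx_shift_dilation V :
  Defs.unitarymx V -> Defs.unitarymx (shift_dilation V).
Proof.
move=> hV; rewrite /Defs.unitarymx adjmx_blkmx mul_blkmx -blkmx1.
apply: eq_blkmx => e g.
have shift_f f : X ^+ (e + 2 * f) *m adjmx (X ^+ (g + 2 * f)) = X ^+ e *m adjmx (X ^+ g).
  by rewrite 2!exprD -mulmxE mulmx_unitary_adj //; apply: unitarymx_shiftX_exp.
under eq_bigr => f _ do rewrite adjmxZ -scalemxAl -scalemxAr scalerA shift_f.
rewrite -scaler_suml.
have -> : \sum_f V e f * (V g f)^* = (V *m adjmx V) e g.
  by rewrite mxE; apply: eq_bigr => f _; rewrite !mxE.
rewrite hV mxE; case: eqP => [->|_]; last by rewrite !scale0r.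
by rewrite unitarymx_shiftX_exp.
Qed.

Lemma Psi_shift_dilation V rho :
  Psi (shift_dilation V) rho =
  \sum_e \sum_f ((rC 3)^-1 * (V e f * (V e f)^*)) *: shift_conj (e + 2 * f)%N rho.
Proof.
rewrite /Psi tensmx_blkmx.
rewrite (@eq_blkmx _ _ _ _ (fun e f => (e == f)%:R *: ((rC 3)^-1 *: rho))); last first.
  by move=> e f; rewrite !mxE scalerA mulrC.
rewrite mul_blkmx_diag adjmx_blkmx mul_blkmx ptraceE_blkmx.
apply: eq_bigr => e _; apply: eq_bigr => f _.
rewrite adjmxZ /shift_conj.
do 3 rewrite -?scalemxAl -?scalemxAr ?scalerA.
by congr (_ *: _); ring.
Qed.

Definition weyl_weight (p1 p2 p3 : R) k : R := nth 0 [:: p1; p2; p3] (k %% 3).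

Definition weyl_transition (p1 p2 p3 : R) : 'M[C]_3 :=
  rC p1 *: 1%:M + rC p2 *: X + rC p3 *: X ^+ 2.

Lemma weyl_channelE p1 p2 p3 rho :
  weyl_channel p1 p2 p3 rho =
  \sum_(k < 3) rC (weyl_weight p1 p2 p3 k) *: shift_conj k rho.
Proof.
rewrite !big_ord_recl big_ord0 addr0 addrA /shift_conj /bump /=.
by rewrite expr0 adjmx1 mul1mx mulmx1.
Qed.

Lemma weyl_transitionE p1 p2 p3 e f :
  weyl_transition p1 p2 p3 e f = rC (weyl_weight p1 p2 p3 (e + 2 * f)%N).
Proof.
rewrite /weyl_transition shiftX2E shiftXE !mxE.
by case: e f => [[|[|[|?]]] ?] [[|[|[|?]]] ?] //=; rewrite ?mulr0 ?mulr1 ?addr0 ?add0r.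
Qed.

Lemma weyl_channel_in_UQ3 p1 p2 p3 (V : 'M[C]_3) :
  Defs.unitarymx V ->
  (forall e f, V e f * (V e f)^* = weyl_transition p1 p2 p3 e f) ->
  in_UQ3 (weyl_channel p1 p2 p3).
Proof.
move=> hV hVT; exists (shift_dilation V); split; first exact: unitarymx_shift_dilation.
move=> rho; rewrite Psi_shift_dilation weyl_channelE exchange_big /=.
pose F k := rC (weyl_weight p1 p2 p3 k) *: shift_conj k rho.
have F_mod k : F k = F (k %% 3)%N by rewrite /F -shift_conj_mod /weyl_weight modn_mod.
transitivity (\sum_(f < 3) (rC 3)^-1 *: \sum_(e < 3) F ((e + 2 * f) %% 3)%N).
  apply: eq_bigr => f _; rewrite scaler_sumr; apply: eq_bigr => e _.
  by rewrite hVT weyl_transitionE -scalerA -F_mod.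
rewrite (eq_bigr (fun=> (rC 3)^-1 *: \sum_(k < 3) F k)); last first.
  by move=> f _; rewrite (sum_mod_shift 2 F).
rewrite sumr_const card_ord scalerMnl rCE rmorph_nat -mulr_natr mulVf ?pnatr_eq0 //.
by rewrite scale1r.
Qed.

Lemma conj_delta_mx_diag n (W : 'M[C]_n) i j :
  (W *m delta_mx j j *m adjmx W) i i = W i j * (W i j)^*.
Proof.
rewrite mxE (bigD1 j) //= big1 ?addr0 => [|k /negbTE nkj]; rewrite mulmx_deltaE !mxE.
  by rewrite eqxx mulr1.
by rewrite nkj mulr0 mul0r.
Qed.

Lemma transition_weyl_channel p1 p2 p3 :
  transition (weyl_channel p1 p2 p3) = weyl_transition p1 p2 p3.
Proof.
apply/matrixP => i j; rewrite mxE mxtrace_delta_mul weyl_channelE summxE.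
under eq_bigr => k _ do rewrite mxE conj_delta_mx_diag.
rewrite weyl_transitionE !big_ord_recl big_ord0 /bump /= expr0 shiftX2E shiftXE.
rewrite !mxE.
by case: i j => [[|[|[|?]]] ?] [[|[|[|?]]] ?] //=; simp01.
Qed.

End Dilation.

Section Unistochastic.
Variable R : realType.
Local Notation C := R[i].

Definition cross_completion (a b c d e f : C) : 'M[C]_3 :=
  mx3 a b c d e f (b * f - c * e)^* (c * d - a * f)^* (a * e - b * d)^*.

Lemma unitarymx_cross_completion a b c d e f :
  a * a^* + b * b^* + c * c^* = 1 -> d * d^* + e * e^* + f * f^* = 1 ->
  a * d^* + b * e^* + c * f^* = 0 ->
  Defs.unitarymx (cross_completion a b c d e f).
Proof.
move=> n1 n2 o12.
have o21 : d * a^* + e * b^* + f * c^* = 0.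
  by move/(congr1 Num.conj): o12; rewrite !rmorphD !rmorphM /= !conjCK conjC0 => <-; ring.
rewrite /Defs.unitarymx adjmx3 mulmx3 -mx3_1 ?conjCK; congr mx3 => //; try ring.
rewrite !rmorphB !rmorphM /=.
transitivity ((a * a^* + b * b^* + c * c^*) * (d * d^* + e * e^* + f * f^*)
   - (a * d^* + b * e^* + c * f^*) * (d * a^* + e * b^* + f * c^*)); first ring.
by rewrite n1 n2 o12 o21; ring.
Qed.

Lemma weyl_transition_unistochastic_of_rows (p1 p2 p3 : R) a b c d e f :
  p1 + p2 + p3 = 1 ->
  a * a^* = rC p1 -> b * b^* = rC p3 -> c * c^* = rC p2 ->
  d * d^* = rC p2 -> e * e^* = rC p1 -> f * f^* = rC p3 ->
  a * d^* + b * e^* + c * f^* = 0 ->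
  exists V : 'M[C]_3, Defs.unitarymx V /\
    forall i j, V i j * (V i j)^* = weyl_transition p1 p2 p3 i j.
Proof.
move=> hp ha hb hc hd he hf o12.
have hp' : rC p1 + rC p2 + rC p3 = 1 by rewrite !rCE -!rmorphD /= hp.
have hV : Defs.unitarymx (cross_completion a b c d e f).
  apply: unitarymx_cross_completion => //.
    by rewrite ha hb hc -hp'; ring.
  by rewrite hd he hf -hp'; ring.
exists (cross_completion a b c d e f); split => // i j.
have := unitarymx_col_sqnorm j hV; rewrite sum3 weyl_transitionE /weyl_weight !mxE.
case: i j => [[|[|[|?]]] ?] [[|[|[|?]]] ?] //= /(canRL (addKr _)) ->;
  by rewrite ?ha ?hb ?hc ?hd ?he ?hf -hp'; ring.
Qed.

Lemma complex_sqmod (x y : R) : (x +i* y)%C * (x +i* y)%C^* = rC (x ^+ 2 + y ^+ 2).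
Proof.
change ((x * x - y * - y) +i* (x * - y + y * x) = (x ^+ 2 + y ^+ 2) +i* 0)%C.
by congr Complex; ring.
Qed.

(* The hypothesis says, by Heron's formula, that x, sqrt Y and sqrt Z are the
   sides of a (possibly degenerate) triangle. *)
Lemma closed_triangle (x Y Z : R) :
  0 < x -> 0 <= 4 * x ^+ 2 * Y - (Z - x ^+ 2 - Y) ^+ 2 ->
  exists u v : C, [/\ u * u^* = rC Y, v * v^* = rC Z & rC x + u + v = 0].
Proof.
move=> x_gt0 heron.
have x_neq0 : x != 0 by rewrite lt0r_neq0.
pose s := Num.sqrt (4 * x ^+ 2 * Y - (Z - x ^+ 2 - Y) ^+ 2).
have s2 : s ^+ 2 = 4 * x ^+ 2 * Y - (Z - x ^+ 2 - Y) ^+ 2 by rewrite sqr_sqrtr.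
pose al := (Z - x ^+ 2 - Y) / (2 * x); pose be := s / (2 * x).
exists (al +i* be)%C, ((- x - al) +i* (- be))%C; split.
- rewrite complex_sqmod; congr rC.
  by rewrite /al /be !expr_div_n s2; field.
- rewrite complex_sqmod; congr rC.
  by rewrite /al /be sqrrN !expr_div_n s2; field.
- change ((x + al + (- x - al)) +i* (0 + be + - be) = 0 +i* 0)%C.
  by congr Complex; ring.
Qed.

Definition hypocycloid (p1 p2 p3 : R) : R :=
  4 * p1 ^+ 2 * p2 * p3 - (p1 - p1 ^+ 2 - p2 * p3) ^+ 2.

Lemma hypocycloid_heron (p1 p2 p3 : R) : p1 + p2 + p3 = 1 ->
  hypocycloid p1 p2 p3 = 4 * (p1 * p2) * (p1 * p3) - (p2 * p3 - p1 * p2 - p1 * p3) ^+ 2.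
Proof. by move=> hp; rewrite /hypocycloid (_ : p1 = 1 - p2 - p3); [ring | rewrite -hp; ring]. Qed.

Lemma weyl_transition_unistochastic_interior (p1 p2 p3 : R) :
  0 < p1 -> 0 < p2 -> 0 < p3 -> p1 + p2 + p3 = 1 -> 0 <= hypocycloid p1 p2 p3 ->
  exists V : 'M[C]_3, Defs.unitarymx V /\
    forall i j, V i j * (V i j)^* = weyl_transition p1 p2 p3 i j.
Proof.
move=> p1_gt0 p2_gt0 p3_gt0 hp hH.
pose s1 := Num.sqrt p1; pose s2 := Num.sqrt p2; pose s3 := Num.sqrt p3.
have [u [v [hu hv huv]]] : exists u v : C,
    [/\ u * u^* = rC (p1 * p3), v * v^* = rC (p2 * p3) & rC (s1 * s2) + u + v = 0].
  apply: closed_triangle; first by rewrite mulr_gt0 ?sqrtr_gt0.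
  by rewrite exprMn !sqr_sqrtr -?hypocycloid_heron //; apply: ltW.
have s_neq0 (p : R) : 0 < p -> rC (Num.sqrt p) != 0.
  by move=> p_gt0; rewrite rCE fmorph_eq0 gt_eqF // sqrtr_gt0.
have s3_neq0 := s_neq0 _ p3_gt0; have s2_neq0 := s_neq0 _ p2_gt0.
apply: (weyl_transition_unistochastic_of_rows (a := rC s1) (b := rC s3) (c := rC s2)
          (d := rC s2) (e := u^* / rC s3) (f := v^* / rC s2));
  rewrite ?rC_sqrt_sqmod ?ltW //.
- rewrite rmorphM fmorphV /= conjCK conj_rC.
  transitivity (u * u^* / (rC s3 * rC s3)); first by field.
  by rewrite hu rC_sqrt ?ltW // !rCE rmorphM /=; field; rewrite fmorph_eq0 gt_eqF.
- rewrite rmorphM fmorphV /= conjCK conj_rC.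
  transitivity (v * v^* / (rC s2 * rC s2)); first by field.
  by rewrite hv rC_sqrt ?ltW // !rCE rmorphM /=; field; rewrite fmorph_eq0 gt_eqF.
- rewrite !rmorphM !fmorphV /= !conjCK !conj_rC -huv !rCE rmorphM /=.
  by field; apply/andP; split.
Qed.

Lemma hypocycloid_cases (p1 p2 p3 : R) :
  0 <= p1 -> 0 <= p2 -> 0 <= p3 -> p1 + p2 + p3 = 1 -> 0 <= hypocycloid p1 p2 p3 ->
  [\/ [/\ 0 < p1, 0 < p2 & 0 < p3], [/\ p1 = 1, p2 = 0 & p3 = 0],
      [/\ p1 = 0, p2 = 1 & p3 = 0] | [/\ p1 = 0, p2 = 0 & p3 = 1]].
Proof.
move=> p1_ge0 p2_ge0 p3_ge0 hp; rewrite hypocycloid_heron // => hH.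
move: p1_ge0 p2_ge0 p3_ge0; rewrite !le0r.
move=> /orP[/eqP ? | p1_gt0] /orP[/eqP ? | p2_gt0] /orP[/eqP ? | p3_gt0]; subst.
- by exfalso; lra.
- by apply: Or44; split; lra.
- by apply: Or43; split; lra.
- by exfalso; have := mulr_gt0 p2_gt0 p3_gt0; nra.
- by apply: Or42; split; lra.
- by exfalso; have := mulr_gt0 p1_gt0 p3_gt0; nra.
- by exfalso; have := mulr_gt0 p1_gt0 p2_gt0; nra.
- exact: Or41.
Qed.

Lemma weyl_transition_unistochastic (p1 p2 p3 : R) :
  0 <= p1 -> 0 <= p2 -> 0 <= p3 -> p1 + p2 + p3 = 1 -> 0 <= hypocycloid p1 p2 p3 ->
  exists V : 'M[C]_3, Defs.unitarymx V /\
    forall i j, V i j * (V i j)^* = weyl_transition p1 p2 p3 i j.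
Proof.
move=> p1_ge0 p2_ge0 p3_ge0 hp hH.
case: (hypocycloid_cases p1_ge0 p2_ge0 p3_ge0 hp hH) => [[? ? ?]|[-> -> ->]|[-> -> ->]|[-> -> ->]].
- exact: weyl_transition_unistochastic_interior.
- apply: (weyl_transition_unistochastic_of_rows (a := 1) (b := 0) (c := 0)
            (d := 0) (e := 1) (f := 0)) => //; by simp01.
- apply: (weyl_transition_unistochastic_of_rows (a := 0) (b := 0) (c := 1)
            (d := 1) (e := 0) (f := 0)) => //; by simp01.
- apply: (weyl_transition_unistochastic_of_rows (a := 0) (b := 1) (c := 0)
            (d := 0) (e := 0) (f := 1)) => //; by simp01.
Qed.

End Unistochastic.

Theorem proposition10 (R : realType) (p1 p2 p3 : R) :
  0 <= p1 -> 0 <= p2 -> 0 <= p3 -> p1 + p2 + p3 = 1 ->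
  0 <= 4 * p1 ^+ 2 * p2 * p3 - (p1 - p1 ^+ 2 - p2 * p3) ^+ 2 ->
  in_UQ3 (weyl_channel p1 p2 p3) /\
  transition (weyl_channel p1 p2 p3)
    = rC p1 *: 1%:M + rC p2 *: shiftX R + rC p3 *: shiftX R ^+ 2 /\
  in_UC3 (transition (weyl_channel p1 p2 p3)).
Proof.
move=> p1_ge0 p2_ge0 p3_ge0 hp hH.
have [V [hV hVT]] := weyl_transition_unistochastic p1_ge0 p2_ge0 p3_ge0 hp hH.
rewrite transition_weyl_channel; split; first exact: weyl_channel_in_UQ3 hV hVT.
split => //; exists V; split => //.
by apply/matrixP => i j; rewrite [RHS]mxE hVT.
Qed.
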